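(* Let $\Phi\in\mathcal{C}^2(\mathbb{R}^d)$, let $x_0,x_1\in\mathbb{R}^d$ and $R:=\max\{|x_0|,|x_1|\}>0$. Let $C:=\sup_{|x|\le 9R}|D^2\Phi(x)|$ and $C_{\rho}:=\max_{|x|\le\rho}|\nabla\Phi(x)|$. Let $t_1>0$ satisfy \[Ct_1^2e^{Ct_1^2}\le\tfrac14,\qquad t_1\le\frac{\sqrt R}{\sqrt{2C_{2R}}},\qquad t_1\le\frac{2\sqrt R}{\sqrt{C_{9R}}}\] (a bound with zero denominator being void). Then for every $0<t\le t_1$ there exists $v_0\in\mathbb{R}^d$ with $|v_0|\le4R$ such that $X_t(x_0,v_0/t)=x_1$.
   Context: $(X_t(x,v),V_t(x,v))$ denotes the solution at time $t$ of the ODE system $\dot x=v$, $\dot v=-\nabla\Phi(x)$ with initial data $(x,v)$; $D^2\Phi$ is the Hessian of $\Phi$ and $|\cdot|$ its operator norm. *)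

From Stdlib Require Import Reals.
From mathcomp Require Import ssreflect ssrbool eqtype ssrnat fintype bigop.
Set Implicit Arguments.
Unset Strict Implicit.
Open Scope R_scope.

Definition vec (d : nat) := 'I_d -> R.

Definition vnorm (d : nat) (x : vec d) : R :=
  sqrt (\big[Rplus/0]_(i < d) (x i * x i)).

Definition shift (d : nat) (x : vec d) (j : 'I_d) (h : R) : vec d :=
  fun i => if i == j then x i + h else x i.

Definition has_partial (d : nat) (f : vec d -> R) (x : vec d) (j : 'I_d) (l : R) : Prop :=
  derivable_pt_lim (fun h => f (shift x j h)) 0 l.

Definition continuous_Rd (d : nat) (f : vec d -> R) : Prop :=
  forall x eps, 0 < eps -> exists delta, 0 < delta /\
    forall y, vnorm (fun i => y i - x i) < delta -> Rabs (f y - f x) < eps.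

Definition C2_with (d : nat) (Phi : vec d -> R) (g : 'I_d -> vec d -> R)
  (H : 'I_d -> 'I_d -> vec d -> R) : Prop :=
  continuous_Rd Phi /\
  (forall x j, has_partial Phi x j (g j x)) /\
  (forall j, continuous_Rd (g j)) /\
  (forall x j k, has_partial (g j) x k (H j k x)) /\
  (forall j k, continuous_Rd (H j k)).

Definition mxapp (d : nat) (A : 'I_d -> 'I_d -> R) (u : vec d) : vec d :=
  fun j => \big[Rplus/0]_(k < d) (A j k * u k).

Definition is_opnorm (d : nat) (A : 'I_d -> 'I_d -> R) (c : R) : Prop :=
  is_lub (fun r => exists u : vec d, vnorm u <= 1 /\ r = vnorm (mxapp A u)) c.

Definition solves_on (d : nat) (g : 'I_d -> vec d -> R) (T : R)
  (xs vs : R -> vec d) (x0 w0 : vec d) : Prop :=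
  (forall i, xs 0 i = x0 i) /\ (forall i, vs 0 i = w0 i) /\
  forall s, 0 <= s <= T -> forall i,
    derivable_pt_lim (fun r => xs r i) s (vs s i) /\
    derivable_pt_lim (fun r => vs r i) s (- g i (xs s)).

From HB Require Import structures.
From Coquelicot Require Import Coquelicot.
From Stdlib Require Import Reals Lra FunctionalExtensionality.
From mathcomp Require Import ssreflect ssrfun ssrbool eqtype ssrnat seq fintype bigop.
Set Implicit Arguments.
Unset Strict Implicit.
Open Scope R_scope.

(* Let rad = max(|x0|, |x1|).  We look for the trajectory as a solution of the
   two-point boundary value problem x(0) = x0, x(t) = x1 instead of shooting
   directly: such a solution is a fixed point of the integral operator
     (P X)(s) = x0 + s/t (x1 - x0) + int_0^t G(s, r) grad Phi(X r) dr,
   G being the Green function of - d^2/ds^2 on [0, t].  On the ball of radius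
   2 rad, a bound C on the Hessian makes grad Phi C-Lipschitz (mean value
   inequality), and the smallness of t makes P map curves of that ball into
   themselves and contract the sup distance by 1/8.  The Picard iterates
   from the straight line x0 -> x1 therefore converge uniformly to a fixed
   point, which is a C^2 solution; its initial velocity is v0/t with
   |v0| <= |x1 - x0| + t^2 sup |grad Phi| <= 4 rad. *)


HB.instance Definition _ := Monoid.isComLaw.Build R 0 Rplus
  (fun x y z => esym (Rplus_assoc x y z)) Rplus_comm Rplus_0_l.
HB.instance Definition _ := Monoid.isMulLaw.Build R 0 Rmult Rmult_0_l Rmult_0_r.
HB.instance Definition _ :=
  Monoid.isAddLaw.Build R Rmult Rplus Rmult_plus_distr_r Rmult_plus_distr_l.

Notation "\sum_ ( i < n ) F" := (\big[Rplus/0]_(i < n) F%R) : R_scope.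

Lemma sum_opp n (F : 'I_n -> R) : \sum_(i < n) - F i = - \sum_(i < n) F i.
Proof. by rewrite (big_morph Ropp Ropp_plus_distr Ropp_0). Qed.

Lemma sum_le (I : finType) (P : pred I) (F G : I -> R) :
  (forall i, F i <= G i) ->
  \big[Rplus/0]_(i | P i) F i <= \big[Rplus/0]_(i | P i) G i.
Proof.
move=> hFG; apply: (big_ind2 Rle); [exact: Rle_refl | | by move=> i _].
by move=> *; apply: Rplus_le_compat.
Qed.

Lemma sum_ge0 (I : finType) (P : pred I) (F : I -> R) :
  (forall i, 0 <= F i) -> 0 <= \big[Rplus/0]_(i | P i) F i.
Proof.
move=> hF; apply: (big_ind (fun x => 0 <= x)); [exact: Rle_refl | | by move=> i _].
by move=> *; apply: Rplus_le_le_0_compat.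
Qed.

Lemma sum_const n (c : R) : \sum_(i < n) c = INR n * c.
Proof. elim: n => [|n IH]; rewrite ?big_ord0 ?big_ord_recr ?IH ?S_INR /=; ring. Qed.

Lemma sum_abs n (F : 'I_n -> R) :
  Rabs (\sum_(i < n) F i) <= \sum_(i < n) Rabs (F i).
Proof.
apply: (big_ind2 (fun x y => Rabs x <= y)); last by move=> i _; apply: Rle_refl.
- by rewrite Rabs_R0; apply: Rle_refl.
- by move=> x1 y1 x2 y2 h1 h2; apply: (Rle_trans _ _ _ (Rabs_triang _ _)); lra.
Qed.

Lemma term_le_sum n (F : 'I_n -> R) k : (forall i, 0 <= F i) -> F k <= \sum_(i < n) F i.
Proof.
move=> hF; rewrite (bigD1 k) //= -[X in X <= _]Rplus_0_r.
by apply: Rplus_le_compat_l; apply: sum_ge0.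
Qed.

Lemma telescope (a : nat -> R) n : \sum_(i < n) (a i.+1 - a i) = a n - a O.
Proof. elim: n => [|n IH]; rewrite ?big_ord0 ?big_ord_recr ?IH /=; ring. Qed.

Lemma finite_delta n (P : 'I_n -> R -> Prop) :
  (forall k a b, 0 < b <= a -> P k a -> P k b) ->
  (forall k, exists a, 0 < a /\ P k a) -> exists a, 0 < a /\ forall k, P k a.
Proof.
move=> Hmono Hex.
have [a [ha Ha]] : exists a, 0 < a /\ forall k : 'I_n, k \in enum 'I_n -> P k a.
  elim: (enum 'I_n) => [|k s [a [ha Ha]]]; first by exists 1; split=> [|k]; [lra | rewrite in_nil].
  have [b [hb Hb]] := Hex k.
  exists (Rmin a b); split; first exact: Rmin_glb_lt.
  move=> i; rewrite inE => /orP [/eqP -> | hi].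
  - by apply: (Hmono _ b) => //; split; [exact: Rmin_glb_lt | exact: Rmin_r].
  - by apply: (Hmono _ a); [split; [exact: Rmin_glb_lt | exact: Rmin_l] | exact: Ha].
by exists a; split => // k; apply: Ha; rewrite mem_enum.
Qed.

Definition dot d (u v : vec d) : R := \sum_(i < d) (u i * v i).

Lemma dot_comm d (u v : vec d) : dot u v = dot v u.
Proof. by apply: eq_bigr => i _; ring. Qed.

Lemma dot_self_ge0 d (u : vec d) : 0 <= dot u u.
Proof. by apply: sum_ge0 => i; apply: Rle_0_sqr. Qed.

Lemma vnorm_ge0 d (u : vec d) : 0 <= vnorm u.
Proof. exact: sqrt_pos. Qed.

Lemma vnorm_sq d (u : vec d) : vnorm u * vnorm u = dot u u.
Proof. by rewrite /vnorm sqrt_sqrt //; apply: dot_self_ge0. Qed.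

Lemma vnorm_ext d (u v : vec d) : (forall i, u i = v i) -> vnorm u = vnorm v.
Proof. by move=> h; rewrite (functional_extensionality u v h). Qed.
Arguments vnorm_ext {d} u v.

Lemma vnorm_le_sq d (u : vec d) B : 0 <= B -> dot u u <= B * B -> vnorm u <= B.
Proof. by move=> hB h; rewrite /vnorm -(sqrt_square B) //; apply: sqrt_le_1_alt. Qed.

Lemma vnorm_zero d : vnorm (fun _ : 'I_d => 0) = 0.
Proof. by rewrite /vnorm big1 ?sqrt_0 // => i _; ring. Qed.

Lemma comp_le_vnorm d (u : vec d) k : Rabs (u k) <= vnorm u.
Proof.
rewrite /vnorm -sqrt_Rsqr_abs; apply: sqrt_le_1_alt.
by rewrite /Rsqr; apply: (@term_le_sum _ (fun i => u i * u i)) => i; apply: Rle_0_sqr.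
Qed.

Lemma vnorm_eq0_comp d (u : vec d) k : vnorm u = 0 -> u k = 0.
Proof. move=> h; have := comp_le_vnorm u k; rewrite h; split_Rabs; lra. Qed.

Lemma dot_vnorm0 d (u v : vec d) : vnorm u = 0 -> dot u v = 0.
Proof. by move=> h; rewrite /dot big1 // => i _; rewrite (vnorm_eq0_comp i h); ring. Qed.

Lemma cauchy_schwarz d (u v : vec d) : dot u v <= vnorm u * vnorm v.
Proof.
set a := vnorm u; set b := vnorm v.
have [ha hb] : 0 <= a /\ 0 <= b by split; apply: vnorm_ge0.
have [a0|a0] := Req_dec a 0; first by rewrite dot_vnorm0 //; nra.
have [b0|b0] := Req_dec b 0; first by rewrite dot_comm dot_vnorm0 //; nra.
have key := dot_self_ge0 (fun i => b * u i - a * v i).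
have expand : dot (fun i => b * u i - a * v i) (fun i => b * u i - a * v i) =
              b * b * dot u u + a * a * dot v v - 2 * (a * b) * dot u v.
  rewrite /dot /Rminus !big_distrr -sum_opp /= -!big_split.
  by apply: eq_bigr => i _; simpl; ring.
rewrite expand -(vnorm_sq u) -(vnorm_sq v) -/a -/b in key.
have hab : 0 < a * b by nra.
nra.
Qed.

Lemma vnorm_triang d (u v : vec d) :
  vnorm (fun i => u i + v i) <= vnorm u + vnorm v.
Proof.
apply: vnorm_le_sq; first by have := vnorm_ge0 u; have := vnorm_ge0 v; lra.
have -> : dot (fun i => u i + v i) (fun i => u i + v i) =
          dot u u + 2 * dot u v + dot v v.
  by rewrite /dot big_distrr /= -!big_split; apply: eq_bigr => i _; simpl; ring.
rewrite -(vnorm_sq u) -(vnorm_sq v); have := cauchy_schwarz u v; nra.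
Qed.

Lemma vnorm_scal d (c : R) (u : vec d) : vnorm (fun i => c * u i) = Rabs c * vnorm u.
Proof.
rewrite /vnorm (_ : \sum_(i < d) _ = (c * c) * dot u u); last first.
  by rewrite /dot big_distrr; apply: eq_bigr => i _; simpl; ring.
rewrite sqrt_mult; [| exact: Rle_0_sqr | exact: dot_self_ge0].
by rewrite -sqrt_Rsqr_abs.
Qed.

Lemma vnorm_sub_sym d (u v : vec d) :
  vnorm (fun i => u i - v i) = vnorm (fun i => v i - u i).
Proof.
rewrite (vnorm_ext (fun i => u i - v i) (fun i => (-1) * (v i - u i))) => [|i]; last ring.
by rewrite vnorm_scal Rabs_Ropp Rabs_R1 Rmult_1_l.
Qed.

Lemma vnorm_triang_sub d (u v w : vec d) :
  vnorm (fun i => u i - w i) <= vnorm (fun i => u i - v i) + vnorm (fun i => v i - w i).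
Proof.
rewrite (vnorm_ext (fun i => u i - w i) (fun i => (u i - v i) + (v i - w i))) => [|i]; last ring.
exact: vnorm_triang.
Qed.

Lemma vnorm_sub_le d (u v : vec d) : vnorm (fun i => u i - v i) <= vnorm u + vnorm v.
Proof.
have := vnorm_triang_sub u (fun _ => 0) v.
rewrite (vnorm_ext (fun i => u i - 0) u) => [|i]; last ring.
rewrite (vnorm_ext (fun i => 0 - v i) (fun i => (-1) * v i)) => [|i]; last ring.
by rewrite vnorm_scal Rabs_Ropp Rabs_R1 Rmult_1_l.
Qed.

Lemma vnorm_sub_self d (u : vec d) : vnorm (fun i => u i - u i) = 0.
Proof. by rewrite (vnorm_ext _ (fun _ => 0)) ?vnorm_zero // => i; ring. Qed.

Lemma vnorm_le_comp d (u v : vec d) :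
  (forall i, Rabs (u i) <= Rabs (v i)) -> vnorm u <= vnorm v.
Proof.
move=> h; apply: sqrt_le_1_alt; apply: sum_le => i.
have := h i; have := Rabs_pos (u i).
by have := Rsqr_abs (u i); have := Rsqr_abs (v i); rewrite /Rsqr; simpl; nra.
Qed.

Lemma ball_convex d (x y : vec d) c rho : 0 <= c <= 1 ->
  vnorm x <= rho -> vnorm y <= rho -> vnorm (fun i => y i + c * (x i - y i)) <= rho.
Proof.
move=> hc hx hy.
rewrite (vnorm_ext _ (fun i => (1 - c) * y i + c * x i)) => [|i]; last ring.
apply: (Rle_trans _ _ _ (vnorm_triang _ _)).
rewrite !vnorm_scal !Rabs_pos_eq; nra.
Qed.

Lemma vnorm_le_sum_abs d (u : vec d) : vnorm u <= \sum_(i < d) Rabs (u i).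
Proof.
apply: vnorm_le_sq; first by apply: sum_ge0 => i; apply: Rabs_pos.
rewrite /dot; elim: d u => [|n IH] u; first by rewrite !big_ord0; lra.
rewrite !big_ord_recr /=; have := IH (fun i => u (widen_ord (leqnSn n) i)).
have : 0 <= \sum_(i < n) Rabs (u (widen_ord (leqnSn n) i)).
  by apply: sum_ge0 => i; apply: Rabs_pos.
have := Rabs_pos (u ord_max); have := Rsqr_abs (u ord_max); rewrite /Rsqr; simpl; nra.
Qed.

Lemma mxapp_zero d (A : 'I_d -> 'I_d -> R) (u : vec d) :
  (forall k, u k = 0) -> forall j, mxapp A u j = 0.
Proof. by move=> hu j; rewrite /mxapp big1 // => k _; rewrite hu; ring. Qed.

Lemma opnorm_ge0 d (A : 'I_d -> 'I_d -> R) c : is_opnorm A c -> 0 <= c.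
Proof.
move=> [Hub _]; apply: Hub; exists (fun _ => 0); rewrite vnorm_zero.
by rewrite (vnorm_ext _ (fun _ => 0)) ?vnorm_zero; [split; lra | apply: mxapp_zero].
Qed.

Lemma opnorm_bound d (A : 'I_d -> 'I_d -> R) c u :
  is_opnorm A c -> vnorm (mxapp A u) <= c * vnorm u.
Proof.
move=> Hc; have c0 := opnorm_ge0 Hc; have hn := vnorm_ge0 u.
have [u0|u0] := Req_dec (vnorm u) 0.
  rewrite (vnorm_ext _ (fun _ => 0)) ?vnorm_zero; first nra.
  by apply: mxapp_zero => k; apply: vnorm_eq0_comp.
have hu : 0 < / vnorm u by apply: Rinv_0_lt_compat; lra.
set w := fun k => / vnorm u * u k.
have hw : vnorm w = 1 by rewrite /w vnorm_scal Rabs_pos_eq; [field | lra].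
have Aw : vnorm (mxapp A w) = / vnorm u * vnorm (mxapp A u).
  rewrite -(Rabs_pos_eq (/ vnorm u)) -?vnorm_scal; last lra.
  apply: vnorm_ext => j; rewrite /mxapp /w big_distrr.
  by apply: eq_bigr => k _; simpl; ring.
have : vnorm (mxapp A w) <= c by case: Hc => Hub _; apply: Hub; exists w; split; lra.
rewrite Aw => h; apply (Rmult_le_compat_l (vnorm u)) in h; last lra.
by move: h; rewrite -Rmult_assoc Rinv_r; lra.
Qed.

Lemma opnorm_exists d (A : 'I_d -> 'I_d -> R) : exists c, is_opnorm A c.
Proof.
set E := fun r => exists u : vec d, vnorm u <= 1 /\ r = vnorm (mxapp A u).
have Ebound : bound E.
  exists (\sum_(j < d) \sum_(k < d) Rabs (A j k)) => r [u [hu ->]].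
  apply: (Rle_trans _ _ _ (vnorm_le_sum_abs _)); apply: sum_le => j.
  apply: (Rle_trans _ _ _ (sum_abs _)); apply: sum_le => k.
  rewrite Rabs_mult; have := comp_le_vnorm u k; have := Rabs_pos (A j k).
  have := Rabs_pos (u k); nra.
have Ene : exists r, E r.
  by exists (vnorm (mxapp A (fun _ => 0))), (fun _ => 0); rewrite vnorm_zero; split; lra.
by have [c Hc] := completeness E Ebound Ene; exists c.
Qed.

(* The increment along h is split into d
   increments along coordinate axes, each controlled by the mean value
   theorem and the continuity of the partials. *)

Lemma shift_shift d (y : vec d) k a b : shift (shift y k a) k b = shift y k (a + b).
Proof. by apply: functional_extensionality => i; rewrite /shift; case: (i == k); ring. Qed.

Lemma shift0 d (y : vec d) k : shift y k 0 = y.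
Proof. by apply: functional_extensionality => i; rewrite /shift; case: (i == k); ring. Qed.

Lemma derivable_pt_lim_shift (phi : R -> R) s l :
  derivable_pt_lim (fun h => phi (s + h)) 0 l -> derivable_pt_lim phi s l.
Proof.
move=> H eps he; have [del Hd] := H eps he; exists del => h hh hl.
by have := Hd h hh hl; rewrite Rplus_0_l Rplus_0_r.
Qed.

Section DirectionalChainRule.
Variables (d : nat) (f : vec d -> R) (Df : 'I_d -> vec d -> R).
Hypothesis f_partial : forall x k, has_partial f x k (Df k x).
Hypothesis Df_cont : forall k, continuous_Rd (Df k).

Lemma partial_along y k s :
  derivable_pt_lim (fun r => f (shift y k r)) s (Df k (shift y k s)).
Proof.
apply: derivable_pt_lim_shift; have := f_partial (shift y k s) k.
by rewrite /has_partial; under [fun h => _]functional_extensionality => h do rewrite shift_shift.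
Qed.

Definition partial_step (q h : vec d) (m : nat) (e : R) : vec d :=
  fun i => q i + (if (i < m)%N then e * h i else 0).

Lemma partial_stepS q h (k : 'I_d) e :
  partial_step q h k.+1 e = shift (partial_step q h k e) k (e * h k).
Proof.
apply: functional_extensionality => i; rewrite /partial_step /shift ltnS leq_eqVlt.
case: (i =P k) => [->|ne]; first by rewrite !eqxx ltnn /=; ring.
by have /eqP/negbTE -> : (i : nat) <> k by move=> E; apply: ne; apply: val_inj.
Qed.

Lemma coordinate_increment q h (k : 'I_d) e eta del :
  (forall y, vnorm (fun i => y i - q i) < del -> Rabs (Df k y - Df k q) < eta) ->
  Rabs e * vnorm h < del ->
  Rabs (f (partial_step q h k.+1 e) - f (partial_step q h k e) - e * (Df k q * h k))
  <= Rabs e * (eta * Rabs (h k)).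
Proof.
move=> Hc Hn; rewrite partial_stepS; set y := partial_step q h k e.
have [r _|r _|c [hc1 hc2]] :=
  MVT_gen (fun r => f (shift y k r)) 0 (e * h k) (fun r => Df k (shift y k r)).
- by apply/is_derive_Reals; apply: partial_along.
- by apply: derivable_continuous_pt; exists (Df k (shift y k r)); apply: partial_along.
move: hc2; rewrite shift0 => ->.
have hcb : Rabs c <= Rabs (e * h k).
  move: hc1; rewrite /Rmin /Rmax; case: Rle_dec => _ hc1; split_Rabs; lra.
have near_q : vnorm (fun i => shift y k c i - q i) < del.
  apply: (Rle_lt_trans _ _ _ _ Hn); rewrite -vnorm_scal.
  apply: vnorm_le_comp => i; rewrite /shift /y /partial_step Rabs_mult.
  case: (i =P k) => [->|_].
    by rewrite ltnn -Rabs_mult (_ : q k + 0 + c - q k = c) //; ring.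
  case: (i < k)%N; rewrite Rplus_minus_l ?Rabs_mult; first exact: Rle_refl.
  by rewrite Rabs_R0; apply: Rmult_le_pos; apply: Rabs_pos.
have := Hc _ near_q.
rewrite (_ : Df k (shift y k c) * (e * h k - 0) - e * (Df k q * h k) =
             (e * h k) * (Df k (shift y k c) - Df k q)); last ring.
rewrite !Rabs_mult (Rmult_comm eta) -Rmult_assoc => H1.
by apply: Rmult_le_compat_l; [apply: Rmult_le_pos; apply: Rabs_pos | lra].
Qed.
Lemma first_order_increment q h e eta del :
  (forall k y, vnorm (fun i => y i - q i) < del -> Rabs (Df k y - Df k q) < eta) ->
  Rabs e * vnorm h < del ->
  Rabs (f (fun i => q i + e * h i) - f q - e * \sum_(k < d) (Df k q * h k))
  <= Rabs e * (eta * \sum_(k < d) Rabs (h k)).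
Proof.
move=> Hc Hn.
have -> : (fun i => q i + e * h i) = partial_step q h d e.
  by apply: functional_extensionality => i; rewrite /partial_step ltn_ord.
rewrite (_ : f q = f (partial_step q h 0 e)); last first.
  by congr f; apply: functional_extensionality => i; rewrite /partial_step ltn0 Rplus_0_r.
have tel := telescope (fun m => f (partial_step q h m e)) d; simpl in tel.
rewrite -tel /Rminus.
rewrite big_distrr -sum_opp /= -big_split /= !big_distrr /=.
apply: (Rle_trans _ _ _ (sum_abs _)); apply: sum_le => k; simpl.
exact: coordinate_increment (Hc k) Hn.
Qed.

Lemma chain_rule_line (p h : vec d) t0 :
  derivable_pt_lim (fun t => f (fun i => p i + t * h i)) t0
    (\sum_(k < d) (Df k (fun i => p i + t0 * h i) * h k)).
Proof.
set q := fun i => p i + t0 * h i; move=> eps heps.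
set S := \sum_(k < d) Rabs (h k).
have hS : 0 <= S by apply: sum_ge0 => i; apply: Rabs_pos.
set eta := eps / (S + 1).
have heta : 0 < eta by apply: Rdiv_lt_0_compat; lra.
have [del [hdel Hdel]] := @finite_delta d
  (fun k a => forall y, vnorm (fun i => y i - q i) < a -> Rabs (Df k y - Df k q) < eta)
  (fun k a b hab H y hy => H y ltac:(lra))
  (fun k => Df_cont k q heta).
have hn := vnorm_ge0 h.
have hpos : 0 < del / (vnorm h + 1) by apply: Rdiv_lt_0_compat; lra.
exists (mkposreal _ hpos) => e he0 /= hel.
have Hn : Rabs e * vnorm h < del.
  apply (Rmult_lt_compat_r (vnorm h + 1)) in hel; last lra.
  move: hel; rewrite /Rdiv Rmult_assoc Rinv_l; have := Rabs_pos e; nra.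
have := first_order_increment Hdel Hn.
have -> : (fun i => q i + e * h i) = (fun i => p i + (t0 + e) * h i).
  by apply: functional_extensionality => i; rewrite /q; ring.
have hea : 0 < Rabs e by apply: Rabs_pos_lt.
rewrite -/S -/q => Hb.
rewrite (_ : (f (fun i => p i + (t0 + e) * h i) - f q) / e - \sum_(k < d) (Df k q * h k)
  = (f (fun i => p i + (t0 + e) * h i) - f q - e * \sum_(k < d) (Df k q * h k)) / e);
  last by field.
rewrite Rabs_div //; apply: (Rle_lt_trans _ (eta * S)).
  apply: (Rmult_le_reg_r (Rabs e)) => //; rewrite /Rdiv Rmult_assoc Rinv_l; lra.
have : eta * S < eps.
  rewrite /eta (_ : eps / (S + 1) * S = eps * (S / (S + 1))); last by field; lra.
  have : S / (S + 1) < 1.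
    apply: (Rmult_lt_reg_r (S + 1)); first lra; rewrite /Rdiv Rmult_assoc Rinv_l; lra.
  nra.
lra.
Qed.
End DirectionalChainRule.

Lemma sum_derivable n (F : 'I_n -> R -> R) (D : 'I_n -> R) x :
  (forall j, derivable_pt_lim (F j) x (D j)) ->
  derivable_pt_lim (fun t => \sum_(j < n) F j t) x (\sum_(j < n) D j).
Proof.
elim: n F D => [|n IH] F D H.
  rewrite big_ord0 (_ : (fun t => _) = fct_cte 0); first exact: derivable_pt_lim_const.
  by apply: functional_extensionality => t; rewrite big_ord0.
rewrite big_ord_recr (_ : (fun t => _) = plus_fct
  (fun t => \sum_(j < n) F (widen_ord (leqnSn n) j) t) (F ord_max)).
  by apply: derivable_pt_lim_plus; [apply: IH => j | ]; apply: H.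
by apply: functional_extensionality => t; rewrite big_ord_recr.
Qed.

(* Apply the mean value
   theorem to t |-> <g x - g y, g (y + t (x - y))> on [0, 1]. *)
Section GradientLipschitz.
Variables (d : nat) (g : 'I_d -> vec d -> R) (H : 'I_d -> 'I_d -> vec d -> R).
Hypothesis g_partial : forall x j k, has_partial (g j) x k (H j k x).
Hypothesis H_cont : forall j k, continuous_Rd (H j k).
Variables rho C : R.
Hypothesis H_bound :
  forall x, vnorm x <= rho -> forall c, is_opnorm (fun j k => H j k x) c -> c <= C.

Lemma gradient_lipschitz x y : vnorm x <= rho -> vnorm y <= rho ->
  vnorm (fun j => g j x - g j y) <= C * vnorm (fun i => x i - y i).
Proof.
move=> hx hy.
set u : vec d := fun i => x i - y i; set w : vec d := fun j => g j x - g j y.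
set pt := fun t : R => (fun i => y i + t * u i) : vec d.
set phi := fun t => \sum_(j < d) (w j * g j (pt t)).
set dphi := fun t => dot w (mxapp (fun j k => H j k (pt t)) u).
have phi_der t : derivable_pt_lim phi t (dphi t).
  apply: sum_derivable => j; apply: (derivable_pt_lim_scal (fun t => g j (pt t))).
  exact: (chain_rule_line (fun x k => g_partial x j k) (H_cont j)).
have [c [hc1 hc2]] := MVT_gen phi 0 1 dphi
   (fun t _ => proj2 (is_derive_Reals _ _ _) (phi_der t))
   (fun t _ => derivable_continuous_pt phi t (exist _ (dphi t) (phi_der t))).
rewrite Rmin_left ?Rmax_right in hc1; try lra.
have phi_incr : phi 1 - phi 0 = dot w w.
  rewrite /phi; have -> : pt 1 = x by apply: functional_extensionality => i; rewrite /pt /u; ring.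
  have -> : pt 0 = y by apply: functional_extensionality => i; rewrite /pt /u; ring.
  by rewrite /dot /Rminus -sum_opp -big_split; apply: eq_bigr => j _; rewrite /w /=; ring.
have [cA HA] := opnorm_exists (fun j k => H j k (pt c)).
have hcA := H_bound (ball_convex hc1 hx hy) HA.
have Hb : vnorm w * vnorm w <= vnorm w * (C * vnorm u).
  rewrite vnorm_sq -phi_incr hc2 Rminus_0_r Rmult_1_r.
  apply: (Rle_trans _ _ _ (cauchy_schwarz _ _)); apply: Rmult_le_compat_l; first exact: vnorm_ge0.
  apply: (Rle_trans _ _ _ (opnorm_bound _ HA)).
  by apply: Rmult_le_compat_r; [apply: vnorm_ge0 | lra].
have [hw|hw] := Req_dec (vnorm w) 0.
  by rewrite /w in hw; rewrite hw; have := opnorm_ge0 HA; have := vnorm_ge0 u; nra.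
by apply: (Rmult_le_reg_l (vnorm w)); [have := vnorm_ge0 w; lra | lra].
Qed.
End GradientLipschitz.

Lemma continuity_pt_eps (f : R -> R) x :
  (forall eps, 0 < eps -> exists del, 0 < del /\
     forall y, Rabs (y - x) < del -> Rabs (f y - f x) < eps) ->
  continuity_pt f x.
Proof.
move=> H eps he; have [del [hd Hd]] := H eps he.
by exists del; split => // y [_ hy]; apply: Hd.
Qed.

Lemma continuity_pt_epsE (f : R -> R) x : continuity_pt f x ->
  forall eps, 0 < eps -> exists del, 0 < del /\
    forall y, Rabs (y - x) < del -> Rabs (f y - f x) < eps.
Proof.
move=> H eps he; have [del [hd Hd]] := H eps he.
exists del; split => // y hy; have [->|ne] := Req_dec y x; first by rewrite Rminus_diag Rabs_R0.
by apply: Hd; split => //; split => //; apply: nesym.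
Qed.

Definition continuous_curve d (Y : R -> vec d) : Prop :=
  forall r eps, 0 < eps -> exists del, 0 < del /\
    forall r', Rabs (r' - r) < del -> vnorm (fun i => Y r' i - Y r i) < eps.

Lemma continuous_curve_comp d (Y : R -> vec d) :
  (forall j r, continuity_pt (fun s => Y s j) r) -> continuous_curve Y.
Proof.
move=> H r eps he; set e' := eps / (INR d + 1).
have hd := pos_INR d.
have he' : 0 < e' by apply: Rdiv_lt_0_compat; lra.
have [del [hdel Hdel]] := @finite_delta d
  (fun j a => forall r', Rabs (r' - r) < a -> Rabs (Y r' j - Y r j) < e')
  (fun j a b hab H r' hr => H r' ltac:(lra))
  (fun j => continuity_pt_epsE (H j r) he').
exists del; split => // r' hr'.
apply: (Rle_lt_trans _ _ _ (vnorm_le_sum_abs _)).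
apply: (Rle_lt_trans _ (INR d * e')).
  by rewrite -sum_const; apply: sum_le => j; left; apply: Hdel.
rewrite /e'; apply: (Rmult_lt_reg_r (INR d + 1)); first lra.
rewrite Rmult_assoc /Rdiv Rmult_assoc Rinv_l; nra.
Qed.

Lemma continuity_pt_along d (f : vec d -> R) (Y : R -> vec d) r :
  continuous_Rd f -> continuous_curve Y -> continuity_pt (fun s => f (Y s)) r.
Proof.
move=> hf hY; apply: continuity_pt_eps => eps he.
have [del1 [hd1 Hd1]] := hf (Y r) eps he.
have [del [hd Hd]] := hY r del1 hd1.
by exists del; split => // r' hr'; apply: Hd1; apply: Hd.
Qed.

Lemma ex_RInt_cont (f : R -> R) a b :
  (forall r, continuity_pt f r) -> ex_RInt f a b.
Proof.
move=> hf; apply: (ex_RInt_continuous (V := R_CompleteNormedModule)) => z _.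
exact/continuity_pt_filterlim.
Qed.

Lemma RInt_sum n (F : 'I_n -> R -> R) a b : (forall i, ex_RInt (F i) a b) ->
  ex_RInt (fun r => \sum_(i < n) F i r) a b /\
  RInt (fun r => \sum_(i < n) F i r) a b = \sum_(i < n) RInt (F i) a b.
Proof.
elim: n F => [|n IH] F H.
  rewrite big_ord0 (_ : (fun r => _) = fun _ => 0); last first.
    by apply: functional_extensionality => r; rewrite big_ord0.
  split; first exact: ex_RInt_const.
  by rewrite RInt_const /scal /= /mult /=; ring.
rewrite big_ord_recr (_ : (fun r => _) = fun r =>
  \sum_(i < n) F (widen_ord (leqnSn n) i) r + F ord_max r); last first.
  by apply: functional_extensionality => r; rewrite big_ord_recr.
have [IH1 IH2] := IH (fun i => F (widen_ord (leqnSn n) i)) (fun i => H _).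
split; first exact: (ex_RInt_plus (V := R_NormedModule) _ _ a b IH1 (H ord_max)).
by rewrite (RInt_plus (V := R_CompleteNormedModule) _ _ a b IH1 (H ord_max)) IH2.
Qed.

Lemma RInt_sub (f g : R -> R) a b : ex_RInt f a b -> ex_RInt g a b ->
  RInt (fun r => f r - g r) a b = RInt f a b - RInt g a b.
Proof. by move=> hf hg; rewrite (RInt_minus f g a b hf hg). Qed.

Lemma RInt_mulc (f : R -> R) a b c : ex_RInt f a b ->
  RInt (fun r => c * f r) a b = c * RInt f a b.
Proof. by move=> hf; rewrite (RInt_scal f a b c hf). Qed.

(* |int_a^b k(r) w(r) dr| <= K M (b - a) for a weight 0 <= k <= K and
   |w| <= M; proved by testing the integral against itself. *)
Lemma vnorm_RInt_le d (a b K M : R) (k : R -> R) (w : R -> vec d) : a <= b ->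
  (forall j, ex_RInt (fun r => k r * w r j) a b) ->
  (forall r, a <= r <= b -> 0 <= k r <= K) ->
  (forall r, a <= r <= b -> vnorm (w r) <= M) -> 0 <= M ->
  vnorm (fun j => RInt (fun r => k r * w r j) a b) <= K * M * (b - a).
Proof.
move=> hab hex hk hw hM.
set I : vec d := fun j => RInt (fun r => k r * w r j) a b.
have [ex_sum int_sum] := RInt_sum (F := fun j r => I j * (k r * w r j))
   (fun j => ex_RInt_scal _ a b (I j) (hex j)).
have II : dot I I = RInt (fun r => \sum_(j < d) (I j * (k r * w r j))) a b.
  by rewrite int_sum; apply: eq_bigr => j _; rewrite RInt_mulc.
have pointwise r : a <= r <= b ->
    \sum_(j < d) (I j * (k r * w r j)) <= K * M * vnorm I.
  move=> hr; rewrite (_ : \sum_(j < d) _ = k r * dot I (w r)); last first.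
    by rewrite /dot big_distrr; apply: eq_bigr => j _; simpl; ring.
  apply: (Rle_trans _ (k r * (vnorm I * vnorm (w r)))).
    by apply: Rmult_le_compat_l; [have := hk r hr; lra | exact: cauchy_schwarz].
  rewrite (_ : K * M * vnorm I = K * (vnorm I * M)); last ring.
  apply: Rmult_le_compat; try by have := hk r hr; lra.
    by apply: Rmult_le_pos; apply: vnorm_ge0.
  by apply: Rmult_le_compat_l; [apply: vnorm_ge0 | apply: hw].
have : vnorm I * vnorm I <= K * M * vnorm I * (b - a).
  rewrite vnorm_sq II; apply: (Rle_trans _ (RInt (fun _ => K * M * vnorm I) a b)).
    apply: RInt_le => //; first exact: ex_RInt_const.
    by move=> r hr; apply: pointwise; lra.
  by rewrite RInt_const /scal /= /mult /=; lra.
have hK : 0 <= K by have := hk a ltac:(lra); lra.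
have [I0|I0] := Req_dec (vnorm I) 0; first by rewrite I0 => _; apply: Rmult_le_pos; [apply: Rmult_le_pos | ]; lra.
by have := vnorm_ge0 I; nra.
Qed.

Lemma derivable_RInt_upper (f : R -> R) a s :
  (forall r, continuity_pt f r) -> derivable_pt_lim (fun s => RInt f a s) s (f s).
Proof.
move=> hc; apply/is_derive_Reals.
apply: (is_derive_RInt f (RInt f a) a s); last exact/continuity_pt_filterlim.
apply: filter_forall => b; apply: (RInt_correct (V := R_CompleteNormedModule)).
exact: ex_RInt_cont.
Qed.

Lemma derivable_RInt_lower (f : R -> R) b s :
  (forall r, continuity_pt f r) -> derivable_pt_lim (fun s => RInt f s b) s (- f s).
Proof.
move=> hc; apply/is_derive_Reals.
apply: (is_derive_RInt' f (fun s => RInt f s b) s b); last exact/continuity_pt_filterlim.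
apply: filter_forall => a; apply: (RInt_correct (V := R_CompleteNormedModule)).
exact: ex_RInt_cont.
Qed.

Lemma is_lim_seq_sum n (F : 'I_n -> nat -> R) (L : 'I_n -> R) :
  (forall i, is_lim_seq (F i) (L i)) ->
  is_lim_seq (fun m => \sum_(i < n) F i m) (\sum_(i < n) L i).
Proof.
elim: n F L => [|n IH] F L H.
  rewrite big_ord0 (_ : (fun m => _) = fun _ => 0); first exact: is_lim_seq_const.
  by apply: functional_extensionality => m; rewrite big_ord0.
rewrite big_ord_recr (_ : (fun m => _) = fun m =>
  \sum_(i < n) F (widen_ord (leqnSn n) i) m + F ord_max m); last first.
  by apply: functional_extensionality => m; rewrite big_ord_recr.
by apply: is_lim_seq_plus'; [apply: IH => i | ]; apply: H.
Qed.

Lemma vnorm_lim_le d (u : nat -> vec d) (l w : vec d) (N : nat) B :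
  (forall j, is_lim_seq (fun m => u m j) (l j)) ->
  (forall m, (N <= m)%N -> vnorm (fun j => u m j - w j) <= B) ->
  vnorm (fun j => l j - w j) <= B.
Proof.
move=> hl hb.
have B0 : 0 <= B by apply: (Rle_trans _ _ _ (vnorm_ge0 _) (hb N (leqnn N))).
apply: vnorm_le_sq => //.
have Hl := is_lim_seq_sum (F := fun j m => (u m j - w j) * (u m j - w j))
  (fun j => is_lim_seq_mult' _ _ _ _
     (is_lim_seq_minus' _ _ _ _ (hl j) (is_lim_seq_const _))
     (is_lim_seq_minus' _ _ _ _ (hl j) (is_lim_seq_const _))).
apply: (is_lim_seq_le_loc _ (fun _ => B * B) _ (B * B) _ Hl (is_lim_seq_const _)).
exists N => m /leP hm; rewrite -[\sum_(j < d) _]/(dot (fun j => u m j - w j) (fun j => u m j - w j)).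
by rewrite -vnorm_sq; have := hb m hm; have := vnorm_ge0 (fun j => u m j - w j); nra.
Qed.

Lemma geometric_small (K e : R) : 0 < K -> 0 < e ->
  exists N, forall n, (N <= n)%N -> K * (/8) ^ n < e.
Proof.
move=> hK he.
have [N HN] := pow_lt_1_zero (/8) ltac:(rewrite Rabs_pos_eq; lra) (e / K)
  ltac:(apply: Rdiv_lt_0_compat; lra).
exists N => n /leP hn; have := HN n hn.
rewrite Rabs_pos_eq; last by left; apply: pow_lt; lra.
move=> h; apply (Rmult_lt_compat_l K) in h => //.
by rewrite (_ : K * (e / K) = e) in h; last by field; lra.
Qed.

(* A curve X solves x'' = - g(x) with
   x(0) = x0 and x(t) = x1 iff it is a fixed point of
     (P X)(s) = x0 + s/t (x1 - x0) + int_0^t G(s, r) g(X r) dr,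
   where G(s, r) = r (t - s)/t for r <= s and s (t - r)/t for r >= s is the
   Green function of - d^2/ds^2 with Dirichlet conditions on [0, t].
   Since int_0^t G(s, r) dr <= t^2/2, P maps curves in the ball of radius
   2 rad into itself when Cg t^2 <= rad/2 (Cg bounding |g| there) and is a
   contraction of ratio 1/8 for the sup norm when C t^2 <= 1/4 (C being a
   Lipschitz constant of g there).  Curves are extended to R through the
   clamp to [0, t], so that all the integrands are continuous on R. *)
Section BoundaryValueProblem.
Variables (d : nat) (g : 'I_d -> vec d -> R) (t rad C Cg : R) (x0 x1 : vec d).
Hypothesis ht : 0 < t.
Hypothesis hrad : 0 < rad.
Hypothesis hx0 : vnorm x0 <= rad.
Hypothesis hx1 : vnorm x1 <= rad.
Hypothesis g_cont : forall j, continuous_Rd (g j).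
Hypothesis g_lip : forall x y, vnorm x <= 2 * rad -> vnorm y <= 2 * rad ->
  vnorm (fun j => g j x - g j y) <= C * vnorm (fun i => x i - y i).
Hypothesis g_bound : forall x, vnorm x <= 2 * rad -> vnorm (fun j => g j x) <= Cg.
Hypothesis C_ge0 : 0 <= C.
Hypothesis C_small : C * (t * t) <= / 4.
Hypothesis Cg_small : Cg * (t * t) <= rad / 2.

Definition clamp r := Rmin t (Rmax 0 r).

Lemma clamp_in r : 0 <= clamp r <= t.
Proof. by rewrite /clamp /Rmin /Rmax; repeat case: Rle_dec; lra. Qed.

Lemma clamp_id s : 0 <= s <= t -> clamp s = s.
Proof. by rewrite /clamp /Rmin /Rmax; repeat case: Rle_dec; lra. Qed.

Lemma clamp_cont r : continuity_pt clamp r.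
Proof.
apply: continuity_pt_eps => eps he; exists eps; split => // y.
by rewrite /clamp /Rmin /Rmax; repeat case: Rle_dec; split_Rabs; lra.
Qed.

Lemma s_div_t_in s : 0 <= s <= t -> 0 <= s / t <= 1.
Proof.
move=> hs; split; first by apply: Rdiv_le_0_compat; lra.
by apply: (Rmult_le_reg_r t) => //; rewrite /Rdiv Rmult_assoc Rinv_l; lra.
Qed.

Definition line s : vec d := fun j => x0 j + s / t * (x1 j - x0 j).

Lemma line_ball s : 0 <= s <= t -> vnorm (line s) <= rad.
Proof. by move=> hs; apply: ball_convex => //; apply: s_div_t_in. Qed.

Lemma line_deriv j s : derivable_pt_lim (fun s => line s j) s ((x1 j - x0 j) / t).
Proof. by apply/is_derive_Reals; rewrite /line; auto_derive => //; field; lra. Qed.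

Lemma id_cont r : continuity_pt (fun r => r) r.
Proof. exact: derivable_continuous_pt (derivable_pt_id r). Qed.

Lemma t_minus_cont r : continuity_pt (fun r => t - r) r.
Proof. by apply: continuity_pt_minus; [apply: continuity_pt_const => ? ? | apply: id_cont]. Qed.

Definition green_int (W : R -> vec d) s : vec d := fun j =>
  (t - s) / t * RInt (fun r => r * W r j) 0 s + s / t * RInt (fun r => (t - r) * W r j) s t.

Definition green_vel (W : R -> vec d) s : vec d := fun j =>
  / t * (RInt (fun r => (t - r) * W r j) s t - RInt (fun r => r * W r j) 0 s).

Section ContinuousSource.
Variable W : R -> vec d.
Hypothesis W_cont : forall j r, continuity_pt (fun r => W r j) r.

Lemma weighted_cont j r : continuity_pt (fun r => r * W r j) r /\
                          continuity_pt (fun r => (t - r) * W r j) r.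
Proof.
by split; apply: continuity_pt_mult; by [apply: id_cont | apply: t_minus_cont | apply: W_cont].
Qed.

Lemma green_int_deriv j s :
  derivable_pt_lim (fun s => green_int W s j) s (green_vel W s j).
Proof.
have hA := derivable_RInt_upper 0 s (fun r => (weighted_cont j r).1).
have hB := derivable_RInt_lower t s (fun r => (weighted_cont j r).2).
have h1 : derivable_pt_lim (fun s => (t - s) / t) s (- / t).
  by apply/is_derive_Reals; auto_derive => //; field; lra.
have h2 : derivable_pt_lim (fun s => s / t) s (/ t).
  by apply/is_derive_Reals; auto_derive => //; field; lra.
have := derivable_pt_lim_plus _ _ s _ _
  (derivable_pt_lim_mult _ _ s _ _ h1 hA) (derivable_pt_lim_mult _ _ s _ _ h2 hB).
by rewrite /green_vel; congr derivable_pt_lim; field; lra.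
Qed.

Lemma green_vel_deriv j s :
  derivable_pt_lim (fun s => green_vel W s j) s (- W s j).
Proof.
have hA := derivable_RInt_upper 0 s (fun r => (weighted_cont j r).1).
have hB := derivable_RInt_lower t s (fun r => (weighted_cont j r).2).
have := derivable_pt_lim_scal _ (/ t) s _ (derivable_pt_lim_minus _ _ s _ _ hB hA).
by congr derivable_pt_lim; field; lra.
Qed.

(* |int_0^t G(s, r) W(r) dr| <= M t^2 / 2 when |W| <= M: a crude bound
   (the sharp constant is 1/8), but sufficient here. *)
Lemma green_int_bound M : 0 <= M -> (forall r, 0 <= r <= t -> vnorm (W r) <= M) ->
  forall s, 0 <= s <= t -> vnorm (green_int W s) <= M * (t * t) / 2.
Proof.
move=> hM hWM s hs.
have IA := @vnorm_RInt_le d 0 s t M (fun r => r) W ltac:(lra)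
  (fun j => ex_RInt_cont 0 s (fun r => (weighted_cont j r).1))
  ltac:(move=> r hr; lra) ltac:(move=> r hr; apply: hWM; lra) hM.
have IB := @vnorm_RInt_le d s t t M (fun r => t - r) W ltac:(lra)
  (fun j => ex_RInt_cont s t (fun r => (weighted_cont j r).2))
  ltac:(move=> r hr; lra) ltac:(move=> r hr; apply: hWM; lra) hM.
apply: (Rle_trans _ _ _ (vnorm_triang _ _)); rewrite !vnorm_scal !Rabs_pos_eq;
  try by apply: Rdiv_le_0_compat; lra.
have hts : (t - s) / t * (t * M * (s - 0)) + s / t * (t * M * (t - s)) = 2 * M * (s * (t - s)).
  by field; lra.
have : s * (t - s) <= t * t / 4 by have := Rle_0_sqr (t - 2 * s); rewrite /Rsqr; nra.
have := s_div_t_in hs; have : 0 <= (t - s) / t by apply: Rdiv_le_0_compat; lra.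
nra.
Qed.

End ContinuousSource.

Lemma green_int_ends (W : R -> vec d) j : green_int W 0 j = 0 /\ green_int W t j = 0.
Proof. by rewrite /green_int !RInt_point /zero /=; split; field; lra. Qed.

Lemma green_int_sub (W V : R -> vec d) :
  (forall j r, continuity_pt (fun r => W r j) r) ->
  (forall j r, continuity_pt (fun r => V r j) r) ->
  forall s j, green_int (fun r i => W r i - V r i) s j = green_int W s j - green_int V s j.
Proof.
move=> hW hV s j; rewrite /green_int.
rewrite (_ : (fun r => r * (W r j - V r j)) = fun r => r * W r j - r * V r j);
  last by apply: functional_extensionality => r; ring.
rewrite (_ : (fun r => (t - r) * (W r j - V r j)) = fun r => (t - r) * W r j - (t - r) * V r j);
  last by apply: functional_extensionality => r; ring.
rewrite !RInt_sub; first ring.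
all: apply: ex_RInt_cont => r.
- exact: (weighted_cont hW j r).2.
- exact: (weighted_cont hV j r).2.
- exact: (weighted_cont hW j r).1.
- exact: (weighted_cont hV j r).1.
Qed.


Definition admissible (X : R -> vec d) : Prop :=
  continuous_curve (fun r => X (clamp r)) /\
  forall s, 0 <= s <= t -> vnorm (X s) <= 2 * rad.

Definition force (X : R -> vec d) r : vec d := fun j => g j (X (clamp r)).

Lemma force_cont X : admissible X -> forall j r, continuity_pt (fun r => force X r j) r.
Proof. by move=> [hX _] j r; apply: continuity_pt_along (g_cont j) hX. Qed.

Lemma force_bound X : admissible X -> forall r, vnorm (force X r) <= Cg.
Proof. by move=> [_ hX] r; apply: g_bound; apply: hX; apply: clamp_in. Qed.

Lemma Cg_ge0 : 0 <= Cg.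
Proof.
have := g_bound (x := fun _ => 0); rewrite vnorm_zero => /(_ ltac:(lra)).
by apply: Rle_trans; apply: vnorm_ge0.
Qed.

Definition picard_map X s : vec d := fun j => line s j + green_int (force X) s j.

Lemma picard_map_deriv X : admissible X -> forall j s,
  derivable_pt_lim (fun s => picard_map X s j) s
    ((x1 j - x0 j) / t + green_vel (force X) s j).
Proof.
move=> hX j s.
exact: derivable_pt_lim_plus (line_deriv j s) (green_int_deriv (force_cont hX) j s).
Qed.

Lemma picard_map_admissible X : admissible X -> admissible (picard_map X).
Proof.
move=> hX; split => [|s hs].
  apply: continuous_curve_comp => j r.
  apply: (continuity_pt_comp clamp (fun s => picard_map X s j) r (clamp_cont r)).
  exact: derivable_continuous_pt (exist _ _ (picard_map_deriv hX j (clamp r))).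
apply: (Rle_trans _ _ _ (vnorm_triang _ _)).
have := green_int_bound (force_cont hX) Cg_ge0 (fun r _ => force_bound hX r) hs.
have := line_ball hs; lra.
Qed.

Lemma picard_map_contraction X Y D : admissible X -> admissible Y ->
  (forall r, 0 <= r <= t -> vnorm (fun i => X r i - Y r i) <= D) ->
  forall s, 0 <= s <= t -> vnorm (fun j => picard_map X s j - picard_map Y s j) <= D / 8.
Proof.
move=> hX hY hD s hs.
have D0 : 0 <= D by apply: (Rle_trans _ _ _ (vnorm_ge0 _) (hD 0 ltac:(lra))).
have hXY := force_cont hX; have hYX := force_cont hY.
have diff_cont j r : continuity_pt (fun r => force X r j - force Y r j) r.
  exact: continuity_pt_minus.
have diff_bound r : 0 <= r <= t -> vnorm (fun j => force X r j - force Y r j) <= C * D.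
  move=> _; apply: (Rle_trans _ _ _ (g_lip (hX.2 _ (clamp_in r)) (hY.2 _ (clamp_in r)))).
  by apply: Rmult_le_compat_l => //; apply: hD; apply: clamp_in.
rewrite (vnorm_ext _ (green_int (fun r j => force X r j - force Y r j) s)) => [|j]; last first.
  by rewrite green_int_sub // /picard_map; ring.
apply: (Rle_trans _ _ _ (green_int_bound diff_cont (Rmult_le_pos _ _ C_ge0 D0) diff_bound hs)).
rewrite (_ : C * D * (t * t) / 2 = (C * (t * t)) * D / 2); last by field.
have : C * (t * t) * D <= / 4 * D by apply: Rmult_le_compat_r.
lra.
Qed.

Fixpoint picard n : R -> vec d :=
  if n is n'.+1 then picard_map (picard n') else line.

Lemma picard_admissible n : admissible (picard n).
Proof.
elim: n => [|n IH]; last exact: picard_map_admissible.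
split => [|s hs]; last by have := line_ball hs; simpl; lra.
apply: continuous_curve_comp => j r.
apply: (continuity_pt_comp clamp (fun s => line s j) r (clamp_cont r)).
exact: derivable_continuous_pt (exist _ _ (line_deriv j (clamp r))).
Qed.

Lemma picard_step n s : 0 <= s <= t ->
  vnorm (fun j => picard n.+1 s j - picard n s j) <= 4 * rad * (/ 8) ^ n.
Proof.
elim: n s => [|n IH] s hs.
  apply: (Rle_trans _ _ _ (vnorm_sub_le _ _)).
  have := (picard_admissible 1).2 s hs; have := (picard_admissible 0).2 s hs; simpl; lra.
have := picard_map_contraction (picard_admissible n.+1) (picard_admissible n) IH hs.
by simpl; lra.
Qed.

Lemma picard_cauchy n m s : 0 <= s <= t -> (n <= m)%N ->
  vnorm (fun j => picard m s j - picard n s j) <= 32 / 7 * rad * (/ 8) ^ n.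
Proof.
move=> hs hnm; have pos : 0 < (/ 8) ^ m by apply: pow_lt; lra.
suff : vnorm (fun j => picard m s j - picard n s j) <=
       32 / 7 * rad * ((/ 8) ^ n - (/ 8) ^ m) by nra.
clear pos.
elim: m hnm => [|m IH]; first by rewrite leqn0 => /eqP ->; rewrite vnorm_sub_self; lra.
rewrite leq_eqVlt ltnS => /orP [/eqP ->|h]; first by rewrite vnorm_sub_self; lra.
apply: (Rle_trans _ _ _ (vnorm_triang_sub _ (picard m s) _)).
by have := picard_step m hs; have := IH h; simpl; lra.
Qed.

Definition picard_lim s : vec d := fun j => real (Lim_seq (fun n => picard n s j)).

Lemma picard_lim_correct s j : 0 <= s <= t ->
  is_lim_seq (fun n => picard n s j) (picard_lim s j).
Proof.
move=> hs; apply: Lim_seq_correct'; apply/ex_lim_seq_cauchy_corr => eps.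
have [N HN] := @geometric_small (32 / 7 * rad) eps ltac:(lra) (cond_pos eps).
exists N => n m /leP hn /leP hm.
wlog hnm : n m hn hm / (n <= m)%N.
  move=> Hw; case: (leqP n m) => h; first exact: Hw.
  by rewrite /Rminus -Rabs_Ropp Ropp_plus_distr Ropp_involutive Rplus_comm; apply: Hw => //; apply: ltnW.
rewrite -Rabs_Ropp Ropp_minus_distr.
apply: (Rle_lt_trans _ _ _ (comp_le_vnorm (fun j => picard m s j - picard n s j) j)).
exact: Rle_lt_trans (picard_cauchy hs hnm) (HN n hn).
Qed.

Lemma picard_lim_dist n s : 0 <= s <= t ->
  vnorm (fun j => picard_lim s j - picard n s j) <= 32 / 7 * rad * (/ 8) ^ n.
Proof.
move=> hs; apply: (vnorm_lim_le (u := fun m => picard m s) (N := n)).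
  by move=> j; apply: picard_lim_correct.
by move=> m hm; apply: picard_cauchy.
Qed.

Lemma picard_lim_admissible : admissible picard_lim.
Proof.
split => [r eps he|s hs].
  have [N HN] := @geometric_small (32 / 7 * rad) (eps / 3) ltac:(lra) ltac:(lra).
  have [del [hdel Hdel]] := (picard_admissible N).1 r (eps / 3) ltac:(lra).
  exists del; split => // r' hr'.
  apply: (Rle_lt_trans _ _ _ (vnorm_triang_sub _ (picard N (clamp r')) _)).
  have h1 := picard_lim_dist N (clamp_in r').
  have h2 := picard_lim_dist N (clamp_in r); rewrite vnorm_sub_sym in h2.
  have := vnorm_triang_sub (picard N (clamp r')) (picard N (clamp r)) (picard_lim (clamp r)).
  have := Hdel r' hr'; have := HN N (leqnn N); lra.
rewrite (vnorm_ext _ (fun j => picard_lim s j - 0)) => [|j]; last ring.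
apply: (vnorm_lim_le (u := fun m => picard m s) (N := 0)) => [j|m _].
  exact: picard_lim_correct.
by rewrite (vnorm_ext _ (picard m s)) => [|j]; [apply: (picard_admissible m).2 | ring].
Qed.

(* The limit is a fixed point: |P X - X| is below every 32/7 rad 8^-n. *)
Lemma picard_lim_fixed s : 0 <= s <= t -> forall j, picard_map picard_lim s j = picard_lim s j.
Proof.
move=> hs j.
set v := vnorm (fun j => picard_map picard_lim s j - picard_lim s j).
suff v0 : v = 0 by have /= := vnorm_eq0_comp j v0; lra.
have [hv|] // : 0 <= v by apply: vnorm_ge0.
exfalso.
have [N HN] := @geometric_small (32 / 7 * rad) (v / 2) ltac:(lra) ltac:(lra).
have h1 := picard_map_contraction picard_lim_admissible (picard_admissible N)
  (fun r hr => picard_lim_dist N hr) hs.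
have h2 := picard_lim_dist N.+1 hs; rewrite vnorm_sub_sym in h2.
have h3 := vnorm_triang_sub (picard_map picard_lim s) (picard N.+1 s) (picard_lim s).
have := HN N (leqnn N); have : 0 < (/ 8) ^ N by apply: pow_lt; lra.
simpl in h2; simpl in h3; rewrite -/v in h3; nra.
Qed.

(* The fixed point solves the boundary value problem; its initial velocity
   is v0 / t with |v0| <= |x1 - x0| + Cg t^2 <= 4 rad. *)
Lemma bvp_solution : exists v0 : vec d, vnorm v0 <= 4 * rad /\
  exists xs vs : R -> vec d,
    solves_on g t xs vs x0 (fun i => v0 i / t) /\ forall i, xs t i = x1 i.
Proof.
set X := picard_lim; have hX := picard_lim_admissible.
set vs := fun s j => (x1 j - x0 j) / t + green_vel (force X) s j.
exists (fun j => t * vs 0 j); split.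
  rewrite (vnorm_ext _ (fun j => (x1 j - x0 j) + RInt (fun r => (t - r) * force X r j) 0 t))
    => [|j]; last by rewrite /vs /green_vel RInt_point /zero /=; field; lra.
  apply: (Rle_trans _ _ _ (vnorm_triang _ _)).
  have := @vnorm_RInt_le d 0 t t Cg (fun r => t - r) (force X) ltac:(lra)
    (fun j => ex_RInt_cont 0 t (fun r => (weighted_cont (force_cont hX) j r).2))
    ltac:(move=> r hr; lra) (fun r _ => force_bound hX r) Cg_ge0.
  have := vnorm_sub_le x1 x0; lra.
exists (picard_map X), vs; split; last by move=> i; rewrite /picard_map (green_int_ends _ i).2 /line; field; lra.
split; [|split].
- by move=> i; rewrite /picard_map (green_int_ends _ i).1 /line; field; lra.
- by move=> i; field; lra.
move=> s hs i; split; first exact: picard_map_deriv.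
have hv := green_vel_deriv (force_cont hX) i s; rewrite /force clamp_id // in hv.
have -> : picard_map X s = X s by apply: functional_extensionality; apply: picard_lim_fixed.
rewrite -[- _]Rplus_0_l; exact: derivable_pt_lim_plus (derivable_pt_lim_const _ s) hv.
Qed.
End BoundaryValueProblem.

Lemma time_bound_exp C t t1 : 0 <= C -> 0 < t <= t1 ->
  C * t1 ^ 2 * exp (C * t1 ^ 2) <= / 4 -> C * (t * t) <= / 4.
Proof.
move=> hC ht h1.
have hCt1 : 0 <= C * t1 ^ 2 by apply: Rmult_le_pos => //; apply: pow2_ge_0.
have := exp_ineq1_le (C * t1 ^ 2).
have : C * (t * t) <= C * t1 ^ 2 by apply: Rmult_le_compat_l => //; simpl; nra.
nra.
Qed.

Lemma time_bound_sqrt a b t t1 : 0 <= a -> 0 < b -> 0 < t <= t1 ->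
  t1 <= sqrt a / sqrt b -> b * (t * t) <= a.
Proof.
move=> ha hb ht h.
have hsb : 0 < sqrt b by apply: sqrt_lt_R0.
have hts : t * sqrt b <= sqrt a.
  apply: (Rle_trans _ (sqrt a / sqrt b * sqrt b)); first by apply: Rmult_le_compat_r; lra.
  by rewrite /Rdiv Rmult_assoc Rinv_l; lra.
have hts0 : 0 <= t * sqrt b by nra.
have := Rmult_le_compat _ _ _ _ hts0 hts0 hts hts.
rewrite sqrt_sqrt // (_ : t * sqrt b * (t * sqrt b) = t * t * (sqrt b * sqrt b)); last ring.
by rewrite sqrt_sqrt; lra.
Qed.

Lemma opnorm_bound_ge0 d (H : 'I_d -> 'I_d -> vec d -> R) rho C : 0 <= rho ->
  (forall x, vnorm x <= rho -> forall c, is_opnorm (fun j k => H j k x) c -> c <= C) ->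
  0 <= C.
Proof.
move=> hrho hC; have [c hc] := opnorm_exists (fun j k => H j k (fun _ => 0)).
have := opnorm_ge0 hc; have := hC (fun _ => 0) ltac:(rewrite vnorm_zero; lra) c hc; lra.
Qed.

Theorem mainTheorem8 (d : nat) (Phi : vec d -> R) (g : 'I_d -> vec d -> R)
  (H : 'I_d -> 'I_d -> vec d -> R)
  (hPhi : C2_with Phi g H)
  (x0 x1 : vec d)
  (hR : 0 < Rmax (vnorm x0) (vnorm x1))
  (C C2R C9R : R)
  (hC : is_lub (fun c => exists x : vec d,
           vnorm x <= 9 * Rmax (vnorm x0) (vnorm x1) /\ is_opnorm (fun j k => H j k x) c) C)
  (hC2R : is_lub (fun c => exists x : vec d,
           vnorm x <= 2 * Rmax (vnorm x0) (vnorm x1) /\ c = vnorm (fun j => g j x)) C2R)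
  (hC9R : is_lub (fun c => exists x : vec d,
           vnorm x <= 9 * Rmax (vnorm x0) (vnorm x1) /\ c = vnorm (fun j => g j x)) C9R)
  (t1 : R) (ht1 : 0 < t1)
  (h1 : C * t1 ^ 2 * exp (C * t1 ^ 2) <= / 4)
  (h2 : C2R <> 0 -> t1 <= sqrt (Rmax (vnorm x0) (vnorm x1)) / sqrt (2 * C2R))
  (h3 : C9R <> 0 -> t1 <= 2 * sqrt (Rmax (vnorm x0) (vnorm x1)) / sqrt C9R) :
  forall t, 0 < t <= t1 ->
  exists v0 : vec d, vnorm v0 <= 4 * Rmax (vnorm x0) (vnorm x1) /\
    exists xs vs : R -> vec d,
      solves_on g t xs vs x0 (fun i => v0 i / t) /\ forall i, xs t i = x1 i.
Proof.
move=> t ht; set rad := Rmax (vnorm x0) (vnorm x1) in hR hC hC2R h2 *.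
case: hPhi => [_ [_ [g_cont [g_partial H_cont]]]].
have H_bound x : vnorm x <= 2 * rad -> forall c, is_opnorm (fun j k => H j k x) c -> c <= C.
  by move=> hx c hc; apply: hC.1; exists x; split => //; lra.
have g_bound x : vnorm x <= 2 * rad -> vnorm (fun j => g j x) <= C2R.
  by move=> hx; apply: hC2R.1; exists x.
have C_ge0 : 0 <= C by apply: (opnorm_bound_ge0 _ H_bound); lra.
have C2R_ge0 : 0 <= C2R.
  apply: (Rle_trans _ _ _ (vnorm_ge0 _) (g_bound (fun _ => 0) _)).
  by rewrite vnorm_zero; lra.
apply: (bvp_solution (C := C) (Cg := C2R)) => //; try lra.
- exact: Rmax_l.
- exact: Rmax_r.
- by move=> x y hx hy; apply: (gradient_lipschitz g_partial H_cont H_bound hx hy).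
- exact: time_bound_exp h1.
- have [C2R_pos|<-] := Rle_lt_or_eq_dec _ _ C2R_ge0; last lra.
  have := @time_bound_sqrt rad (2 * C2R) t t1 ltac:(lra) ltac:(lra) ht
    (h2 (Rgt_not_eq _ _ C2R_pos)).
  nra.
Qed.
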